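(* Let $X,Y$ be Banach spaces, $T:X\to Y$ a bounded linear operator, $1\le p\le 2$ and $c>0$. Then $T$ is uniformly $p$-smooth with constant $c$ if and only if $T$ has strong martingale type $p$ with constant $c$.
   Context: Dyadic setting: for $k=0,1,2,\dots$, $\mathcal F_k$ is the $\sigma$-algebra on $[0,1)$ generated by the dyadic intervals $[i/2^k,(i+1)/2^k)$, $i=0,\dots,2^k-1$ (so $\mathcal F_0$ is trivial), with Lebesgue measure. A sequence $d_1,\dots,d_n$ of $X$-valued functions on $[0,1)$ is a sequence of differences of a dyadic martingale if each $d_k$ is $\mathcal F_k$-measurable and $\mathbb E(d_k\mid\mathcal F_{k-1})=0$. For $f:[0,1)\to X$, $\|f|L_p\|=(\int_0^1\|f(t)\|^p\,dt)^{1/p}$. $T$ is uniformly $p$-smooth with constant $c$ if for all $x\in X$, $y\in Y$: $\left(\frac{\|y+Tx\|^p+\|y-Tx\|^p}{2}-\|y\|^p\right)^{1/p}\le c\|x\|$. $T$ has strong martingale type $p$ with constant $c$ if for all $n\in\mathbb N$, all $y\in Y$ and all sequences $d_1,\dots,d_n$ of $X$-valued differences of dyadic martingales: $\left\|y+\sum_{k=1}^nTd_k\Big|L_p\right\|\le\left(\|y\|^p+c^p\sum_{k=1}^n\|d_k|L_p\|^p\right)^{1/p}$. *)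

From HB Require Import structures.
From mathcomp Require Import all_boot all_order all_algebra.
From mathcomp Require Import all_classical all_reals all_analysis.
Import Order.TTheory GRing.Theory Num.Theory.
Import numFieldNormedType.Exports.
Set Implicit Arguments. Unset Strict Implicit. Unset Printing Implicit Defensive.
Local Open Scope classical_set_scope.
Local Open Scope ring_scope.

Section dyadic.
Context {R : realType}.

Definition dyadic_atom (k i : nat) : set R :=
  `[ (i%:R / 2 ^+ k), (i.+1%:R / 2 ^+ k) [.

(* f : [0,1) -> X (represented as R -> X; values outside [0,1) are irrelevant)
   is F_k-measurable: F_k is generated by the finite partition of [0,1) into
   the atoms dyadic_atom k i, so measurability means constancy on each atom. *)
Definition dyadic_measurable {X : Type} (k : nat) (f : R -> X) : Prop :=
  forall i : nat, (i < 2 ^ k)%N ->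
  forall s t, dyadic_atom k i s -> dyadic_atom k i t -> f s = f t.

(* E(d | F_{k-1}) for an F_k-measurable d (k >= 1): on the atom
   dyadic_atom (k-1) i it equals the average of d over that atom, i.e. the
   mean of the values of d on its two halves dyadic_atom k (2i), dyadic_atom k (2i+1). *)
Definition dyadic_cond_exp_value {X : normedModType R} (k : nat) (d : R -> X)
  (i : nat) : X :=
  2^-1 *: (d ((i.*2)%:R / 2 ^+ k) + d ((i.*2).+1%:R / 2 ^+ k)).

Definition dyadic_mart_diff {X : normedModType R} (k : nat) (d : R -> X) : Prop :=
  dyadic_measurable k d /\
  forall i : nat, (i < 2 ^ k.-1)%N -> dyadic_cond_exp_value k d i = 0.

Definition Lp_norm {X : normedModType R} (p : R) (f : R -> X) : R :=
  (fine (\int[lebesgue_measure]_(t in `[0%R, 1%R[) ((`|f t| `^ p)%:E))) `^ p^-1.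

Definition bounded_op {X Y : normedModType R} (T : X -> Y) : Prop :=
  exists M : R, forall x, `|T x| <= M * `|x|.

Definition uniformly_p_smooth {X Y : normedModType R} (T : X -> Y) (p c : R) : Prop :=
  forall (x : X) (y : Y),
    ((`|y + T x| `^ p + `|y - T x| `^ p) / 2 - `|y| `^ p) `^ p^-1 <= c * `|x|.

Definition strong_martingale_type {X Y : normedModType R} (T : X -> Y) (p c : R) : Prop :=
  forall (n : nat) (y : Y) (d : nat -> R -> X),
    (forall k, (1 <= k <= n)%N -> dyadic_mart_diff k (d k)) ->
    Lp_norm p (fun t => y + \sum_(1 <= k < n.+1) T (d k t))
      <= (`|y| `^ p + c `^ p * \sum_(1 <= k < n.+1) (Lp_norm p (d k)) `^ p) `^ p^-1.

End dyadic.

(* Both properties are equivalent to the p-th power inequality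
   (|y + T x|^p + |y - T x|^p) / 2 <= |y|^p + c^p |x|^p: for p >= 1 the left
   side already dominates |y|^p by convexity, so taking p-th roots in the
   definition of uniform smoothness loses nothing.  For dyadic martingales,
   every L_p norm is an average over the atoms of the finest level, and the
   difference d_(n+1) takes opposite values v, -v on the two halves of each
   atom of level n; applying the inequality atom by atom gives strong
   martingale type by induction on n.  Conversely, a single Rademacher
   difference turns strong martingale type with n = 1 into that inequality. *)

From HB Require Import structures.
From mathcomp Require Import all_boot all_order all_algebra.
From mathcomp Require Import all_classical all_reals all_analysis.
From mathcomp Require Import measurable_realfun lebesgue_integral.
From mathcomp Require Import ring lra.
Import Order.TTheory GRing.Theory Num.Theory.
Import numFieldNormedType.Exports.
Local Open Scope classical_set_scope.
Local Open Scope ring_scope.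

Section dyadic_points.
Context {R : realType}.

Definition dyadic_point (n i : nat) : R := i%:R / 2 ^+ n.

Lemma dyadic_atomE n i :
  dyadic_atom n i = `[dyadic_point n i, dyadic_point n i.+1[%classic.
Proof. by []. Qed.

Lemma dyadic_point_ge0 n i : 0 <= dyadic_point n i.
Proof. by rewrite divr_ge0 ?exprn_ge0. Qed.

Lemma ler_dyadic_point n :
  {mono dyadic_point n : i j / (i <= j)%N >-> i <= j}.
Proof. by move=> i j; rewrite ler_pM2r ?invr_gt0 ?exprn_gt0 // ler_nat. Qed.

Lemma ltr_dyadic_point n :
  {mono dyadic_point n : i j / (i < j)%N >-> i < j}.
Proof. by move=> i j; rewrite ltr_pM2r ?invr_gt0 ?exprn_gt0 // ltr_nat. Qed.

Lemma dyadic_point_exp n : dyadic_point n (2 ^ n) = 1.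
Proof. by rewrite /dyadic_point natrX divff // expf_neq0. Qed.

Lemma dyadic_point_refine {k n} q : (k <= n)%N ->
  dyadic_point k q = dyadic_point n (q * 2 ^ (n - k)).
Proof.
move=> kn; rewrite /dyadic_point natrM natrX -[in 2 ^+ n](subnKC kn) exprD.
by field; rewrite !expf_neq0.
Qed.

Lemma dyadic_atom_point n i : dyadic_atom n i (dyadic_point n i).
Proof. by rewrite dyadic_atomE /= in_itv /= lexx ltr_dyadic_point ltnSn. Qed.

Lemma dyadic_atom_coarsen {k n i} {t : R} : (k <= n)%N -> dyadic_atom n i t ->
  dyadic_atom k (i %/ 2 ^ (n - k)) t.
Proof.
move=> kn; rewrite !dyadic_atomE /= !in_itv /= => /andP[it ti].
have e0 : (0 < 2 ^ (n - k))%N by rewrite expn_gt0.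
rewrite !(dyadic_point_refine _ kn); apply/andP; split.
  by apply: le_trans it; rewrite ler_dyadic_point leq_divM.
by apply: (lt_le_trans ti); rewrite ler_dyadic_point ltn_ceil.
Qed.

Lemma dyadic_atom_parent n i : dyadic_atom n i./2 (dyadic_point n.+1 i).
Proof.
by have := dyadic_atom_coarsen (leqnSn n) (dyadic_atom_point n.+1 i);
  rewrite subSnn expn1 divn2.
Qed.

Lemma dyadic_measurableW {Z : Type} {k n} {f : R -> Z} : (k <= n)%N ->
  dyadic_measurable k f -> dyadic_measurable n f.
Proof.
move=> kn fk i i_lt s t /(dyadic_atom_coarsen kn) si /(dyadic_atom_coarsen kn).
apply: fk si; rewrite ltn_divLR ?expn_gt0 // -expnD subnKC //.
Qed.

Lemma dyadic_measurable_point {Z : Type} {n} {f : R -> Z} {i t} :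
  dyadic_measurable n f -> (i < 2 ^ n)%N -> dyadic_atom n i t ->
  f t = f (dyadic_point n i).
Proof. by move=> fn i_lt ti; apply: fn ti (dyadic_atom_point n i). Qed.

End dyadic_points.

Lemma big_nat_double {V : nmodType} (f : nat -> V) m :
  \sum_(0 <= i < m.*2) f i = \sum_(0 <= j < m) (f j.*2 + f j.*2.+1).
Proof.
elim: m => [|m IH]; first by rewrite !big_geq.
by rewrite doubleS !big_nat_recr //= IH addrA.
Qed.

Section dyadic_integral.
Context {R : realType}.
Local Notation mu := (@lebesgue_measure R).

Definition dyadic_mean n (g : R -> R) : R :=
  \sum_(0 <= i < 2 ^ n) g (dyadic_point n i) / 2 ^+ n.

Lemma dyadic_mean_ge0 n (g : R -> R) : (forall t, 0 <= g t) ->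
  0 <= dyadic_mean n g.
Proof. by move=> g0; apply: sumr_ge0 => i _; rewrite divr_ge0 ?exprn_ge0. Qed.

Lemma dyadic_meanS n (g : R -> R) : dyadic_mean n.+1 g =
  \sum_(0 <= j < 2 ^ n)
    (g (dyadic_point n.+1 j.*2) + g (dyadic_point n.+1 j.*2.+1)) / 2 / 2 ^+ n.
Proof.
rewrite /dyadic_mean expnS mul2n big_nat_double; apply: eq_bigr => j _.
by rewrite exprS; field; rewrite expf_neq0.
Qed.

Lemma dyadic_mean0 (g : R -> R) : dyadic_mean 0 g = g 0.
Proof. by rewrite /dyadic_mean big_nat1 expr0 !divr1 /dyadic_point mul0r. Qed.

Lemma dyadic_mean1 (g : R -> R) : dyadic_mean 1 g = (g 0 + g 2^-1) / 2.
Proof.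
by rewrite dyadic_meanS big_nat1 /dyadic_point expr0 !expr1 !divr1 mul0r div1r.
Qed.

Lemma dyadic_prefix0 n : `[0, dyadic_point n 0[%classic = set0 :> set R.
Proof.
apply/seteqP; split=> t //=.
by rewrite in_itv /= /dyadic_point mul0r => /andP[? ?]; lra.
Qed.

Lemma dyadic_prefixS n m : `[0, dyadic_point n m.+1[%classic =
  `[0, dyadic_point n m[%classic `|` dyadic_atom n m :> set R.
Proof.
have m_ge0 := dyadic_point_ge0 (R := R) n m.
have m_lt : dyadic_point (R := R) n m < dyadic_point n m.+1.
  by rewrite ltr_dyadic_point.
rewrite dyadic_atomE; apply/seteqP; split=> t /=; rewrite !in_itv /=.
  by case: (ltP t (dyadic_point n m)) => ? /andP[? ?]; [left|right]; apply/andP.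
by move=> [/andP[? ?]|/andP[? ?]]; apply/andP; split; lra.
Qed.

Lemma dyadic_prefix_atom_disjoint n m :
  [disjoint `[0, dyadic_point n m[%classic & dyadic_atom n m :> set R].
Proof.
apply/disj_setPS => t; rewrite dyadic_atomE /= !in_itv /=.
by move=> -[/andP[_ ?] /andP[? _]]; lra.
Qed.

Section step_function.
Variables (n : nat) (g : R -> R).
Hypotheses (g_ge0 : forall t, 0 <= g t) (g_step : dyadic_measurable n g).

Lemma measurable_fun_dyadic_atom m : (m < 2 ^ n)%N ->
  measurable_fun (dyadic_atom n m : set R) (fun t => (g t)%:E).
Proof.
move=> m_lt; apply: (eq_measurable_fun (cst (g (dyadic_point n m))%:E)).
  by move=> t; rewrite inE => /(dyadic_measurable_point g_step m_lt) ->.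
exact: measurable_cst.
Qed.

Lemma integral_dyadic_atom m : (m < 2 ^ n)%N ->
  (\int[mu]_(t in dyadic_atom n m) (g t)%:E = (g (dyadic_point n m) / 2 ^+ n)%:E)%E.
Proof.
move=> m_lt; rewrite (eq_integral (cst (g (dyadic_point n m))%:E)); last first.
  by move=> t; rewrite inE => /(dyadic_measurable_point g_step m_lt) ->.
rewrite integral_cst dyadic_atomE; last exact: measurable_itv.
rewrite /= lebesgue_measure_itv /= lte_fin ltr_dyadic_point ltnSn -EFinD -EFinM.
by congr (_ %:E); rewrite /dyadic_point -mulrBl -natrB // subSnn mul1r.
Qed.

Lemma measurable_fun_dyadic_prefix m : (m <= 2 ^ n)%N ->
  measurable_fun `[0, dyadic_point n m[%classic (fun t => (g t)%:E).
Proof.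
elim: m => [_|m IH m_lt].
  by rewrite dyadic_prefix0; exact: measurable_fun_set0.
rewrite dyadic_prefixS; apply/measurable_funU.
- exact: measurable_itv.
- by rewrite dyadic_atomE; exact: measurable_itv.
- by split; [exact: IH (ltnW m_lt)|exact: measurable_fun_dyadic_atom].
Qed.

Lemma integral_dyadic_prefix m : (m <= 2 ^ n)%N ->
  (\int[mu]_(t in `[0%R, dyadic_point n m[%classic) (g t)%:E =
    (\sum_(0 <= i < m) g (dyadic_point n i) / 2 ^+ n)%:E)%E.
Proof.
elim: m => [_|m IH m_lt].
  by rewrite big_geq // dyadic_prefix0 integral_set0.
rewrite dyadic_prefixS ge0_integral_setU //=.
- by rewrite IH ?(ltnW m_lt) // integral_dyadic_atom // big_nat_recr.
- by rewrite dyadic_atomE; exact: measurable_itv.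
- rewrite -dyadic_prefixS; exact: measurable_fun_dyadic_prefix.
- by move=> t _; rewrite lee_fin.
- exact: dyadic_prefix_atom_disjoint.
Qed.

Lemma integral_dyadic_step :
  (\int[mu]_(t in `[0%R, 1%R[%classic) (g t)%:E = (dyadic_mean n g)%:E)%E.
Proof. by rewrite -(dyadic_point_exp n) integral_dyadic_prefix. Qed.

End step_function.
End dyadic_integral.

Section powR_root.
Context {R : realType}.
Implicit Types p a b : R.

Lemma powRVK p a : 0 < p -> 0 <= a -> (a `^ p^-1) `^ p = a.
Proof. by move=> p0 a0; rewrite -powRrM mulVf ?gt_eqF ?powRr1. Qed.

Lemma powRKV p a : 0 < p -> 0 <= a -> (a `^ p) `^ p^-1 = a.
Proof. by move=> p0 a0; rewrite -powRrM mulfV ?gt_eqF ?powRr1. Qed.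

Lemma ler_powRV p : 0 < p ->
  {in Num.nneg &, {mono @powR R ^~ p^-1 : a b / a <= b}}.
Proof.
move=> p0 a b a0 b0; apply/idP/idP => ab; last first.
  by apply: ge0_ler_powR => //; rewrite invr_ge0 ltW.
rewrite nnegrE in a0 b0; rewrite -(powRVK _ _ p0 a0) -(powRVK _ _ p0 b0).
by apply: ge0_ler_powR ab; rewrite ?(ltW p0) // nnegrE powR_ge0.
Qed.

End powR_root.

Section Lp_step.
Context {R : realType} {Z : normedModType R}.

Lemma Lp_norm_dyadic (p : R) {n} {f : R -> Z} : dyadic_measurable n f ->
  Lp_norm p f = dyadic_mean n (fun t => `|f t| `^ p) `^ p^-1.
Proof.
move=> f_step; rewrite /Lp_norm (integral_dyadic_step n) // => i i_lt s t si ti.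
by rewrite (f_step _ i_lt _ _ si ti).
Qed.

Lemma Lp_norm_dyadic_powR (p : R) {n} {f : R -> Z} : 0 < p ->
  dyadic_measurable n f ->
  Lp_norm p f `^ p = dyadic_mean n (fun t => `|f t| `^ p).
Proof.
move=> p0 f_step; rewrite (Lp_norm_dyadic p f_step) powRVK //.
by apply: dyadic_mean_ge0 => t; exact: powR_ge0.
Qed.

End Lp_step.

Lemma convex_powR_mid {R : realType} {p a b : R} : 1 <= p -> 0 <= a -> 0 <= b ->
  ((a + b) / 2) `^ p <= (a `^ p + b `^ p) / 2.
Proof.
move=> p1 a0 b0; have half : 2^-1 = 1 - 2^-1 :> R.
  by rewrite {2}(splitr 1) div1r addrK.
rewrite !mulrDl ![_ / 2]mulrC {2 4}half.
apply: (convex_powR p1 (Itv01 _ _)) => //=;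
  by rewrite ?inE/= ?in_itv/= ?a0 ?b0// ?invr_ge0// invf_le1 ?ler1n.
Qed.

Lemma norm_powR_le_mid {R : realType} {Y : normedModType R} {p : R} (y w : Y) :
  1 <= p -> `|y| `^ p <= (`|y + w| `^ p + `|y - w| `^ p) / 2.
Proof.
move=> p1; apply: le_trans (convex_powR_mid p1 (normr_ge0 _) (normr_ge0 _)).
apply: ge0_ler_powR; rewrite ?nnegrE ?(le_trans _ p1) ?divr_ge0 ?addr_ge0 //.
rewrite ler_pdivlMr // mulr_natr -normrMn mulr2n.
have -> : y + y = (y + w) + (y - w) by rewrite addrACA subrr addr0.
exact: ler_normD.
Qed.

Definition uniformly_p_smooth_pow {R : realType} {X Y : normedModType R}
    (T : X -> Y) (p c : R) : Prop :=
  forall (x : X) (y : Y),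
    (`|y + T x| `^ p + `|y - T x| `^ p) / 2 <= `|y| `^ p + c `^ p * `|x| `^ p.

Lemma uniformly_p_smoothE {R : realType} {X Y : normedModType R} (T : X -> Y)
    (p c : R) : 1 <= p -> 0 <= c ->
  uniformly_p_smooth T p c <-> uniformly_p_smooth_pow T p c.
Proof.
move=> p1 c0; have p0 : 0 < p by apply: lt_le_trans p1.
have cx0 (x : X) : 0 <= c * `|x| by rewrite mulr_ge0.
suff root_le x y : (((`|y + T x| `^ p + `|y - T x| `^ p) / 2 - `|y| `^ p)
    `^ p^-1 <= c * `|x|) = ((`|y + T x| `^ p + `|y - T x| `^ p) / 2
    <= `|y| `^ p + c `^ p * `|x| `^ p).
  by split=> smooth x y; have := smooth x y; rewrite root_le.
have := norm_powR_le_mid y (T x) p1; set m := (_ + _) / 2 => mid.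
rewrite -lerBlDl -powRM // -[in LHS](powRKV _ _ p0 (cx0 x)).
by rewrite ler_powRV // nnegrE ?subr_ge0 ?powR_ge0.
Qed.

Lemma dyadic_mart_diff_sibling {R : realType} {X : normedModType R} {n}
    {d : R -> X} {j} : dyadic_mart_diff n.+1 d -> (j < 2 ^ n)%N ->
  d (dyadic_point n.+1 j.*2.+1) = - d (dyadic_point n.+1 j.*2).
Proof.
move=> [_ d_mean0] /d_mean0 /eqP; rewrite /dyadic_cond_exp_value.
by rewrite scaler_eq0 invr_eq0 pnatr_eq0 /= addrC addr_eq0 => /eqP.
Qed.

Section martingale_type.
Context {R : realType} {X Y : normedModType R} (T : {additive X -> Y}) (p c : R).

Lemma dyadic_measurable_partial_sum {n} (y : Y) {d : nat -> R -> X} :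
  (forall k, (1 <= k <= n)%N -> dyadic_measurable k (d k)) ->
  dyadic_measurable n (fun t => y + \sum_(1 <= k < n.+1) T (d k t)).
Proof.
move=> d_step i i_lt s t si ti; congr (_ + _).
apply: eq_big_nat => k k_range; congr (T _).
have kn : (k <= n)%N by case/andP: k_range.
exact: (dyadic_measurableW kn (d_step k k_range)) _ i_lt _ _ si ti.
Qed.

Hypothesis smooth : uniformly_p_smooth_pow T p c.

Lemma dyadic_mean_martingale_step n (G : R -> Y) (d : R -> X) :
  dyadic_measurable n G -> dyadic_mart_diff n.+1 d ->
  dyadic_mean n.+1 (fun t => `|G t + T (d t)| `^ p) <=
  dyadic_mean n (fun t => `|G t| `^ p) +
    c `^ p * dyadic_mean n.+1 (fun t => `|d t| `^ p).
Proof.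
move=> G_step d_diff; rewrite !dyadic_meanS /dyadic_mean mulr_sumr -big_split /=.
apply: ler_sum_nat => j /andP[_ j_lt].
have parent i : (i./2 = j)%N -> G (dyadic_point n.+1 i) = G (dyadic_point n j).
  by move=> ij; apply: (dyadic_measurable_point G_step j_lt); rewrite -ij;
    exact: dyadic_atom_parent.
rewrite (parent j.*2) ?doubleK // (parent j.*2.+1); last exact: uphalf_double.
move: (dyadic_mart_diff_sibling d_diff j_lt) => ->.
rewrite raddfN normrN mulrA -mulrDl ler_pM2r ?invr_gt0 ?exprn_gt0 //.
by rewrite [X in c `^ p * X]mulrDl -splitr; exact: smooth.
Qed.

Lemma dyadic_mean_martingale n (y : Y) (d : nat -> R -> X) :
  (forall k, (1 <= k <= n)%N -> dyadic_mart_diff k (d k)) ->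
  dyadic_mean n (fun t => `|y + \sum_(1 <= k < n.+1) T (d k t)| `^ p) <=
  `|y| `^ p + c `^ p * \sum_(1 <= k < n.+1) dyadic_mean k (fun t => `|d k t| `^ p).
Proof.
elim: n => [_|n IH d_diff].
  by rewrite dyadic_mean0 !big_geq // addr0 mulr0 addr0.
have d_diff_le k : (1 <= k <= n)%N -> dyadic_mart_diff k (d k).
  by move=> /andP[k1 kn]; apply: d_diff; rewrite k1 leqW.
rewrite big_nat_recr //= mulrDr addrA.
under eq_fun => t do rewrite big_nat_recr //= addrA.
apply: le_trans (lerD (IH d_diff_le) (lexx _)).
apply: dyadic_mean_martingale_step; last by apply: d_diff; rewrite leqnn.
by apply: dyadic_measurable_partial_sum => k /d_diff_le [].
Qed.

End martingale_type.

Definition rademacher {R : realType} {V : zmodType} (x : V) (t : R) : V :=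
  if t < 2^-1 then x else - x.

Lemma dyadic_mart_diff_rademacher {R : realType} {X : normedModType R} (x : X) :
  dyadic_mart_diff 1 (rademacher (R := R) x).
Proof.
split=> [i i_lt s t|i].
  rewrite !dyadic_atomE /= !in_itv /= /dyadic_point /rademacher expr1.
  case: i i_lt => [|[|//]] _; rewrite ?mul0r ?mulr1n ?div1r.
  - by move=> /andP[_ ->] /andP[_ ->].
  - by move=> /andP[s_ge _] /andP[t_ge _]; rewrite ltNge s_ge ltNge t_ge.
rewrite expn0 ltnS leqn0 => /eqP ->.
rewrite /dyadic_cond_exp_value /rademacher /dyadic_point /= expr1.
by rewrite mul0r mulr1n div1r invr_gt0 ltr0n ltxx subrr scaler0.
Qed.

Section martingale_type_smooth.
Context {R : realType} {X Y : normedModType R} (T : {additive X -> Y}) (p c : R).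
Hypothesis p_gt0 : 0 < p.

Lemma strong_martingale_type_of_smooth_pow :
  uniformly_p_smooth_pow T p c -> strong_martingale_type T p c.
Proof.
move=> smooth n y d d_diff.
have d_step k : (1 <= k <= n)%N -> dyadic_measurable k (d k).
  by move=> /d_diff [].
rewrite (Lp_norm_dyadic p (dyadic_measurable_partial_sum T y d_step)).
under eq_big_nat => k /d_step k_step do rewrite (Lp_norm_dyadic_powR p p_gt0 k_step).
rewrite ler_powRV ?nnegrE ?dyadic_mean_ge0 ?addr_ge0 ?mulr_ge0 ?powR_ge0 //.
  exact: dyadic_mean_martingale.
by apply: sumr_ge0 => k _; apply: dyadic_mean_ge0 => t; exact: powR_ge0.
Qed.

Lemma smooth_pow_of_strong_martingale_type :
  strong_martingale_type T p c -> uniformly_p_smooth_pow T p c.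
Proof.
move=> smt x y; pose d (_ : nat) := rademacher (R := R) x.
have d_diff k : (1 <= k <= 1)%N -> dyadic_mart_diff k (d k).
  by rewrite -eqn_leq => /eqP <-; exact: dyadic_mart_diff_rademacher.
have := smt 1%N y d d_diff.
have d_step k : (1 <= k <= 1)%N -> dyadic_measurable k (d k).
  by move=> /d_diff [].
rewrite (Lp_norm_dyadic p (dyadic_measurable_partial_sum T y d_step)).
rewrite big_nat1 (Lp_norm_dyadic_powR p p_gt0 (d_step 1%N isT)) !dyadic_mean1.
rewrite !big_nat1 /d /rademacher invr_gt0 ltr0n ltxx /= raddfN normrN.
rewrite ler_powRV ?nnegrE ?addr_ge0 ?mulr_ge0 ?divr_ge0 ?powR_ge0 //.
by rewrite [X in c `^ p * X]mulrDl -splitr.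
Qed.

End martingale_type_smooth.

Theorem theorem2 (R : realType) (X Y : completeNormedModType R)
  (T : {linear X -> Y}) (p c : R) :
  bounded_op T -> 1 <= p <= 2 -> 0 < c ->
  (uniformly_p_smooth T p c <-> strong_martingale_type T p c).
Proof.
move=> _ /andP[p_ge1 _] c_gt0; have p_gt0 : 0 < p by apply: lt_le_trans p_ge1.
rewrite uniformly_p_smoothE ?(ltW c_gt0) //; split.
- exact: strong_martingale_type_of_smooth_pow.
- exact: smooth_pow_of_strong_martingale_type.
Qed.
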